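(* Let $\kappa=k_1k_2\cdots k_s$ where $k_1\le\cdots\le k_s$ are primes, and $\mathbb Z^\kappa=\mathbb Z_{k_1}\times\cdots\times\mathbb Z_{k_s}$. Consider the linear control network $\Sigma$ over $\mathbb Z^\kappa$: $Z(t+1)=AZ(t)+BU(t)$, $Y(t)=CZ(t)$, with $Z(t)\in(\mathbb Z^\kappa)^n$, $U(t)\in(\mathbb Z^\kappa)^m$, $Y(t)\in(\mathbb Z^\kappa)^p$, $A\in(\mathbb Z^\kappa)^{n\times n}$, $B\in(\mathbb Z^\kappa)^{n\times m}$, $C\in(\mathbb Z^\kappa)^{p\times n}$, all operations in $\mathbb Z^\kappa$. For $i\in[1,s]$ let $\Sigma_i$ be the linear control network over $\mathbb Z_{k_i}$: $X^i(t+1)=A^iX^i(t)+B^iU^i(t)$, $Y^i(t)=C^iX^i(t)$, where $A^i=\phi_i(A)$, $B^i=\phi_i(B)$, $C^i=\phi_i(C)$ (entrywise projections). Then $\Sigma=\Sigma_1\times\Sigma_2\times\cdots\times\Sigma_s$, and $\Sigma$ is controllable (respectively observable) if and only if every $\Sigma_i$, $i\in[1,s]$, is controllable (respectively observable).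
   Context: $\mathbb Z_p$ is the ring of integers modulo $p$; $\mathbb Z^\kappa$ has componentwise operations, and $\phi_i:\mathbb Z^\kappa\to\mathbb Z_{k_i}$ is the $i$-th coordinate projection. $\Sigma=\Sigma_1\times\cdots\times\Sigma_s$ means: for every initial state and control sequence of $\Sigma$, the $i$-th coordinate of the trajectory of $\Sigma$ equals the trajectory of $\Sigma_i$ started at the $i$-th coordinate of the initial state and driven by the $i$-th coordinates of the controls. Controllable means: for any initial state $z_0$ and target $z_d$ there exist $T\ge0$ and a control sequence steering $z_0$ to $z_d$ at time $T$. Observable means: any two distinct initial states can be distinguished by the outputs under some control sequence. *)

From HB Require Import structures.
From mathcomp Require Import all_boot all_order all_algebra.
Set Implicit Arguments. Unset Strict Implicit. Unset Printing Implicit Defensive.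
Import GRing.Theory.
Local Open Scope ring_scope.

Definition Zk (s : nat) (k : 'I_s -> nat) : Type := forall i : 'I_s, 'Z_(k i).

Section ZkOps.
Variables (s : nat) (k : 'I_s -> nat).
Definition zzero : Zk k := fun i => 0.
Definition zadd (x y : Zk k) : Zk k := fun i => x i + y i.
Definition zmul (x y : Zk k) : Zk k := fun i => x i * y i.

Definition zmulmx (p n q : nat) (A : 'M[Zk k]_(p, n)) (X : 'M[Zk k]_(n, q))
  : 'M[Zk k]_(p, q) :=
  \matrix_(r, c) \big[zadd/zzero]_(j < n) zmul (A r j) (X j c).
Definition zaddmx (p q : nat) (A B : 'M[Zk k]_(p, q)) : 'M[Zk k]_(p, q) :=
  \matrix_(r, c) zadd (A r c) (B r c).

Definition phi (i : 'I_s) (p q : nat) (A : 'M[Zk k]_(p, q)) : 'M['Z_(k i)]_(p, q) :=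
  \matrix_(r, c) A r c i.

Fixpoint ztraj (n m : nat) (A : 'M[Zk k]_n) (B : 'M[Zk k]_(n, m))
  (z0 : 'cV[Zk k]_n) (u : nat -> 'cV[Zk k]_m) (t : nat) : 'cV[Zk k]_n :=
  match t with
  | 0 => z0
  | t'.+1 => zaddmx (zmulmx A (ztraj A B z0 u t')) (zmulmx B (u t'))
  end.

Definition zcontrollable (n m : nat) (A : 'M[Zk k]_n) (B : 'M[Zk k]_(n, m)) :=
  forall z0 zd : 'cV[Zk k]_n, exists (T : nat) (u : nat -> 'cV[Zk k]_m),
    ztraj A B z0 u T = zd.

Definition zobservable (n m p : nat) (A : 'M[Zk k]_n) (B : 'M[Zk k]_(n, m))
  (C : 'M[Zk k]_(p, n)) :=
  forall z0 z1 : 'cV[Zk k]_n, z0 <> z1 ->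
    exists (u : nat -> 'cV[Zk k]_m) (t : nat),
      zmulmx C (ztraj A B z0 u t) <> zmulmx C (ztraj A B z1 u t).
End ZkOps.

Section RingNet.
Variable R : comNzRingType.
Fixpoint traj (n m : nat) (A : 'M[R]_n) (B : 'M[R]_(n, m))
  (x0 : 'cV[R]_n) (u : nat -> 'cV[R]_m) (t : nat) : 'cV[R]_n :=
  match t with
  | 0 => x0
  | t'.+1 => A *m traj A B x0 u t' + B *m u t'
  end.

Definition controllable (n m : nat) (A : 'M[R]_n) (B : 'M[R]_(n, m)) :=
  forall x0 xd : 'cV[R]_n, exists (T : nat) (u : nat -> 'cV[R]_m),
    traj A B x0 u T = xd.

Definition observable (n m p : nat) (A : 'M[R]_n) (B : 'M[R]_(n, m))
  (C : 'M[R]_(p, n)) :=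
  forall x0 x1 : 'cV[R]_n, x0 <> x1 ->
    exists (u : nat -> 'cV[R]_m) (t : nat),
      C *m traj A B x0 u t <> C *m traj A B x1 u t.
End RingNet.

(* Evaluating at coordinate i is a ring morphism Z^kappa -> Z_{k_i}, so it maps
   trajectories and outputs of Sigma to those of Sigma_i, and a state of Sigma is
   determined by its s coordinates. Observability transfers both ways by
   embedding a state (or input) of Sigma_i into Sigma with zeros elsewhere.
   Controllability of Sigma needs one steering time for all coordinates at once;
   over a finite ring, a controllable network can steer between any two states in
   every large enough time T: the targets reachable from 0 form a family growing
   with T (delay the input), and finitely many states bound the time needed. *)

From mathcomp Require Import all_boot all_order all_algebra.
From Stdlib Require Import FunctionalExtensionality.
Set Implicit Arguments. Unset Strict Implicit. Unset Printing Implicit Defensive.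
Import GRing.Theory.
Local Open Scope ring_scope.

Section Trajectories.
Variables (R : comNzRingType) (n m : nat) (A : 'M[R]_n) (B : 'M[R]_(n, m)).

Lemma traj_superposition x0 u t :
  traj A B x0 u t = traj A B x0 (fun _ => 0) t + traj A B 0 u t.
Proof.
elim: t => [|t IH] /=; first by rewrite addr0.
by rewrite IH mulmx0 addr0 mulmxDr addrA.
Qed.

Lemma traj0_delay u t :
  traj A B 0 (fun j => if j is j'.+1 then u j' else 0) t.+1 = traj A B 0 u t.
Proof.
elim: t => [|t IH]; first by rewrite /= !mulmx0 addr0.
by rewrite -[RHS]/(A *m traj A B 0 u t + B *m u t) -IH.
Qed.

Lemma reachable0_mono t T y :
  (t <= T)%N -> (exists u, traj A B 0 u t = y) -> exists u, traj A B 0 u T = y.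
Proof.
elim: T => [|T IH]; first by rewrite leqn0 => /eqP->.
rewrite leq_eqVlt ltnS => /orP[/eqP-> //|/IH{}IH /IH[u hu]].
by exists (fun j => if j is j'.+1 then u j' else 0); rewrite traj0_delay.
Qed.

End Trajectories.

Lemma controllable_uniform_time (R : finComNzRingType) n m
    (A : 'M[R]_n) (B : 'M[R]_(n, m)) :
  controllable A B ->
  exists N, forall T, (N <= T)%N -> forall x0 xd, exists u, traj A B x0 u T = xd.
Proof.
move=> ctrlAB.
have [Tof reach] : exists Tof : 'cV[R]_n -> nat,
    forall y, exists u, traj A B 0 u (Tof y) = y.
  exact: fin_all_exists (fun y => ctrlAB 0 y).
exists (\max_y Tof y)%N => T leNT x0 xd.
set y := xd - traj A B x0 (fun _ => 0) T.
have [u hu] : exists u, traj A B 0 u T = y.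
  by apply: (reachable0_mono _ (reach y)); apply: leq_trans leNT; apply: leq_bigmax.
by exists u; rewrite traj_superposition hu /y addrC subrK.
Qed.

Section Coordinates.
Variables (s : nat) (k : 'I_s -> nat).

Definition glue p q (f : forall i : 'I_s, 'M['Z_(k i)]_(p, q)) : 'M[Zk k]_(p, q) :=
  \matrix_(r, c) (fun i => f i r c).

Definition embed (i : 'I_s) p q (x : 'M['Z_(k i)]_(p, q)) : 'M[Zk k]_(p, q) :=
  glue (dfwith (fun j => 0) (i := i) x).

Lemma phi_glue i p q (f : forall i : 'I_s, 'M['Z_(k i)]_(p, q)) :
  phi i (glue f) = f i.
Proof. by apply/matrixP => r c; rewrite !mxE. Qed.

Lemma phi_embed i p q (x : 'M['Z_(k i)]_(p, q)) : phi i (embed x) = x.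
Proof. by rewrite phi_glue dfwith_in. Qed.

Lemma phi_embed_out i j p q (x : 'M['Z_(k i)]_(p, q)) :
  i != j -> phi j (embed x) = 0.
Proof. by move=> neq_ij; rewrite phi_glue dfwith_out. Qed.

Lemma phi_inj p q (M N : 'M[Zk k]_(p, q)) : (forall i, phi i M = phi i N) -> M = N.
Proof.
move=> eqMN; apply/matrixP => r c; apply: functional_extensionality_dep => i.
by have /matrixP/(_ r c) := eqMN i; rewrite !mxE.
Qed.

Lemma phi_neq p q (M N : 'M[Zk k]_(p, q)) : M <> N -> exists i, phi i M <> phi i N.
Proof.
move=> neqMN; case: (pickP (fun i => phi i M != phi i N)) => [i /eqP|eqMN].
  by exists i.
by case: neqMN; apply: phi_inj => i; apply/eqP/negbFE/eqMN.
Qed.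

Lemma phi_zaddmx i a b (M N : 'M[Zk k]_(a, b)) :
  phi i (zaddmx M N) = phi i M + phi i N.
Proof. by apply/matrixP => r c; rewrite !mxE. Qed.

Lemma phi_zmulmx i a b c (M : 'M[Zk k]_(a, b)) (N : 'M[Zk k]_(b, c)) :
  phi i (zmulmx M N) = phi i M *m phi i N.
Proof.
apply/matrixP => r c'; rewrite !mxE.
rewrite (big_morph (fun x : Zk k => x i) (id1 := 0) (op1 := +%R)) //.
by apply: eq_bigr => j _; rewrite !mxE.
Qed.

Variables (n m p : nat) (A : 'M[Zk k]_n) (B : 'M[Zk k]_(n, m)) (C : 'M[Zk k]_(p, n)).

Lemma phi_ztraj i z0 u t :
  phi i (ztraj A B z0 u t)
  = traj (phi i A) (phi i B) (phi i z0) (fun t' => phi i (u t')) t.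
Proof. by elim: t => [|t IH] //=; rewrite phi_zaddmx !phi_zmulmx IH. Qed.

Lemma zcontrollable_phi i : zcontrollable A B -> controllable (phi i A) (phi i B).
Proof.
move=> ctrl x0 xd; have [T [u hu]] := ctrl (embed x0) (embed xd).
exists T, (fun t => phi i (u t)).
by rewrite -[x0](phi_embed x0) -phi_ztraj hu phi_embed.
Qed.

Lemma phi_controllable :
  (forall i, controllable (phi i A) (phi i B)) -> zcontrollable A B.
Proof.
move=> ctrl z0 zd.
have [N uniform] := fin_all_exists (fun i => controllable_uniform_time (ctrl i)).
pose T := (\max_i N i)%N.
have [w hw] : exists w : forall i, nat -> 'cV['Z_(k i)]_m,
    forall i, traj (phi i A) (phi i B) (phi i z0) (w i) T = phi i zd.
  exact: fin_all_exists (fun i => uniform i T (leq_bigmax i) (phi i z0) (phi i zd)).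
exists T, (fun t => glue (fun i => w i t)).
apply: phi_inj => i; rewrite phi_ztraj -hw; congr traj.
by apply: functional_extensionality => t; rewrite phi_glue.
Qed.

Lemma zobservable_phi i :
  zobservable A B C -> observable (phi i A) (phi i B) (phi i C).
Proof.
move=> obs x0 x1 neq_x; have [|u [t]] := obs (embed x0) (embed x1).
  by move/(congr1 (@phi _ _ i _ _)); rewrite !phi_embed.
move/phi_neq => [j]; rewrite !phi_zmulmx !phi_ztraj.
have [<-|neq_ij] := eqVneq i j; last by rewrite !phi_embed_out.
by rewrite !phi_embed; exists (fun t' => phi i (u t')), t.
Qed.

Lemma phi_observable :
  (forall i, observable (phi i A) (phi i B) (phi i C)) -> zobservable A B C.
Proof.
move=> obs z0 z1 /phi_neq[i /obs[u [t neq_y]]].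
exists (fun t' => embed (u t')), t => /(congr1 (@phi _ _ i _ _)).
rewrite !phi_zmulmx !phi_ztraj.
have -> : (fun t' => phi i (embed (u t'))) = u.
  by apply: functional_extensionality => t'; rewrite phi_embed.
exact: neq_y.
Qed.

End Coordinates.

Theorem proposition9p2 (s : nat) (k : 'I_s -> nat)
  (hprime : forall i : 'I_s, prime (k i))
  (hsorted : forall i j : 'I_s, (i <= j)%N -> (k i <= k j)%N)
  (n m p : nat) (A : 'M[Zk k]_n) (B : 'M[Zk k]_(n, m)) (C : 'M[Zk k]_(p, n)) :
  (* Sigma = Sigma_1 x ... x Sigma_s *)
  (forall (z0 : 'cV[Zk k]_n) (u : nat -> 'cV[Zk k]_m) (t : nat) (i : 'I_s),
      phi i (ztraj A B z0 u t)
        = traj (phi i A) (phi i B) (phi i z0) (fun t' => phi i (u t')) t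
   /\ phi i (zmulmx C (ztraj A B z0 u t))
        = phi i C *m traj (phi i A) (phi i B) (phi i z0) (fun t' => phi i (u t')) t)
  /\ (zcontrollable A B <-> forall i : 'I_s, controllable (phi i A) (phi i B))
  /\ (zobservable A B C <->
        forall i : 'I_s, observable (phi i A) (phi i B) (phi i C)).
Proof.
split; first by move=> z0 u t i; rewrite phi_zmulmx phi_ztraj.
split; split.
- by move=> ctrl i; apply: zcontrollable_phi.
- exact: phi_controllable.
- by move=> obs i; apply: zobservable_phi.
- exact: phi_observable.
Qed.
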